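(* For every positive integer $n$ such that $h_{n-1}h_{n+1}-h_n^2\neq 0$, $$h_{n+3}=\frac{h_{n+1}^3-2h_nh_{n+1}h_{n+2}+h_{n-1}h_{n+2}^2}{h_{n-1}h_{n+1}-h_n^2}.$$
   Context: Let $p,q,a,b$ be complex numbers. The Horadam-Lucas sequence $(h_n)_{n\ge0}$ is defined by $h_0=2b-ap$, $h_1=bp-2aq$, and $h_n=ph_{n-1}-qh_{n-2}$ for $n\ge 2$. *)

From mathcomp Require Import all_boot all_order all_algebra.
From mathcomp Require Import complex.
From mathcomp Require Import reals.
Set Implicit Arguments. Unset Strict Implicit. Unset Printing Implicit Defensive.
Import GRing.Theory.
Local Open Scope ring_scope.

(* Horadam-Lucas sequence over a commutative ring:
   h_0 = 2b - a p, h_1 = b p - 2 a q, h_n = p h_{n-1} - q h_{n-2}. *)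
Fixpoint horadam_lucas_pair (F : comRingType) (p q a b : F) (n : nat) : F * F :=
  match n with
  | 0 => (2 * b - a * p, b * p - 2 * a * q)
  | m.+1 => let: (x, y) := horadam_lucas_pair p q a b m in (y, p * y - q * x)
  end.

Definition horadam_lucas (F : comRingType) (p q a b : F) (n : nat) : F :=
  (horadam_lucas_pair p q a b n).1.

From mathcomp Require Import all_boot all_order all_algebra.
From mathcomp Require Import complex reals.
From mathcomp Require Import ring.
Import GRing.Theory.
Local Open Scope ring_scope.

(* Two consecutive instances of the recurrence form a linear system in [p] and
   [q] with determinant D = u_m u_(m+2) - u_(m+1)^2; Cramer's rule gives D p
   and D q in terms of the sequence alone, and substituting them into the next
   instance D u_(m+4) = (D p) u_(m+3) - (D q) u_(m+2) yields the formula. *)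

Lemma horadam_lucasSS (F : comNzRingType) (p q a b : F) (m : nat) :
  horadam_lucas p q a b m.+2 =
  p * horadam_lucas p q a b m.+1 - q * horadam_lucas p q a b m.
Proof.
by rewrite /horadam_lucas /=; case: (horadam_lucas_pair p q a b m).
Qed.

Section SecondOrderRecurrence.

Variables (F : comPzRingType) (p q : F) (u : nat -> F).
Hypothesis u_rec : forall k, u k.+2 = p * u k.+1 - q * u k.

Lemma rec_cramer_p (m : nat) :
  (u m * u m.+2 - u m.+1 ^+ 2) * p = u m * u m.+3 - u m.+1 * u m.+2.
Proof. by rewrite !u_rec; ring. Qed.

Lemma rec_cramer_q (m : nat) :
  (u m * u m.+2 - u m.+1 ^+ 2) * q = u m.+1 * u m.+3 - u m.+2 ^+ 2.
Proof. by rewrite !u_rec; ring. Qed.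

Lemma rec_det_mulS4 (m : nat) :
  (u m * u m.+2 - u m.+1 ^+ 2) * u m.+4 =
  u m.+2 ^+ 3 - 2 * u m.+1 * u m.+2 * u m.+3 + u m * u m.+3 ^+ 2.
Proof.
rewrite [u m.+4]u_rec mulrBr !mulrA rec_cramer_p rec_cramer_q.
ring.
Qed.

End SecondOrderRecurrence.

Theorem mainTheorem4 (R : realType) (p q a b : R[i]) (n : nat) :
  (0 < n)%N ->
  let h := horadam_lucas p q a b in
  h n.-1 * h n.+1 - h n ^+ 2 != 0 ->
  h n.+3 = (h n.+1 ^+ 3 - 2 * h n * h n.+1 * h n.+2 + h n.-1 * h n.+2 ^+ 2)
           / (h n.-1 * h n.+1 - h n ^+ 2).
Proof.
case: n => [//|m] _ h /= det_neq0; rewrite {}/h in det_neq0 *.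
apply: (mulIf det_neq0); rewrite divfK // mulrC.
by apply: rec_det_mulS4; apply: horadam_lucasSS.
Qed.
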